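(* Let $c,\rho>0$ and let $\{(\mathbf z^t,\mathbf w^t,\boldsymbol\lambda^t)\}_{t\ge0}$ be generated by Algorithm SP-ADMM-JCNL. Then for all $t\ge1$, $$\mathcal L(\mathbf z^{t+1},\mathbf w^{t+1},\boldsymbol\lambda^{t+1})-\mathcal L(\mathbf z^t,\mathbf w^t,\boldsymbol\lambda^t)\le\sum_{i\in\mathcal N}\Big[-\tfrac c2\|\Delta\mathbf z_i^{t+1}\|^2_{\mathbf S_i}-\tfrac\rho2\|\Delta\mathbf w_i^{t+1}\|^2+\tfrac{3(N_{\max}+2)}{c}\|\mathbf H_i\Delta\tilde{\mathbf z}_i^{t+1}-\mathbf D_i\Delta\mathbf w_i^t\|^2+3c(2N_{\max}+1)\|\Delta\tilde{\mathbf z}_i^{t+1}-\Delta\mathbf z_i^{t+1}\|^2_{\mathbf A_i^T\mathbf A_i}+3(1+2c)(2+N_{\max})\|\Delta\tilde{\mathbf z}_i^{t+1}-\Delta\mathbf z_i^{t}\|^2_{\mathbf S_i}\Big],$$ where $N_{\max}=\max_{i}N_i$.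
   Context: $G=(\mathcal N,\mathcal E)$ is a connected undirected graph on $\mathcal N=\{1,\dots,N\}$, $\mathcal N_i=\{j:(i,j)\in\mathcal E\}$, $N_i=|\mathcal N_i|\ge1$ (neighbors listed in a fixed order). $\mathcal A\subseteq\mathcal N$ is a nonempty set of anchors with known positions $\mathbf a_k\in\mathbb R^n$. Measurements $d_{i,j}=d_{j,i}\ge0$ ($j\in\mathcal N_i$) and $r_i\ge0$. $\mathcal B^{k}$ is the product of $k$ closed Euclidean unit balls of $\mathbb R^n$; $\delta_C$ is the indicator function of $C$. Variables: $\mathbf z_i=(\mathbf x_i,\mathbf p_i^-,\mathbf p_i^+,\mathbf y_i,\mathbf q_i^-,\mathbf q_i^+)\in\mathbb R^{(4N_i+2)n}$ with $\mathbf p_i^\pm=(\mathbf p^\pm_{i,j})_{j\in\mathcal N_i}$, $\mathbf q_i^\pm=(\mathbf q^\pm_{i,j})_{j\in\mathcal N_i}$ (blocks in $\mathbb R^n$), $\mathbf z=(\mathbf z_i)_i$; $\mathbf w_i=((\mathbf v_{i,j})_{j\in\mathcal N_i},\mathbf u_i)\in\mathbb R^{(N_i+1)n}$, $\mathbf w=(\mathbf w_i)_i$; $\boldsymbol\lambda_i\in\mathbb R^{3N_in}$. Linear maps (identified with their matrices): $\mathbf H_i\mathbf z_i=((\mathbf x_i-\mathbf p^+_{i,j})_{j},\mathbf x_i-\mathbf y_i)$, $\mathbf A_i\mathbf z_i=((\mathbf x_i-\mathbf p^-_{i,j})_j,(\mathbf y_i-\mathbf q^-_{i,j})_j,(\mathbf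 y_i-\mathbf q^+_{i,j})_j)$, $\mathbf D_i=\mathrm{Diag}((d_{i,j})_{j\in\mathcal N_i},r_i)\otimes\mathbf I_n$. $G_i(\mathbf z_i,\mathbf w_i)=\frac12\|\mathbf H_i\mathbf z_i\|^2-\mathbf w_i^T\mathbf D_i\mathbf H_i\mathbf z_i$. $\mathcal X=\{\mathbf z:\mathbf x_i=\mathbf a_i\ \forall i\in\mathcal A\}$, $\mathcal Y=\{\mathbf z:\mathbf p^+_{i,j}=\mathbf p^-_{j,i},\ \mathbf q^+_{i,j}=\mathbf q^-_{j,i}\ \forall i,\ j\in\mathcal N_i\}$. $|\mathbf M|$ is the entrywise absolute value, $\|\mathbf v\|^2_{\mathbf M}=\mathbf v^T\mathbf M\mathbf v$, $\mathbf S_i=|\mathbf A_i^T\mathbf A_i|+\frac1c|\mathbf H_i^T\mathbf H_i|$, $\mathbf U_i=\mathbf H_i^T\mathbf H_i+c\mathbf A_i^T\mathbf A_i+c\mathbf S_i$ (a positive definite diagonal matrix). Augmented Lagrangian: $\mathcal L_i(\mathbf z_i,\mathbf w_i,\boldsymbol\lambda_i)=G_i(\mathbf z_i,\mathbf w_i)+\delta_{\mathcal B^{N_i+1}}(\mathbf w_i)+\langle\boldsymbol\lambda_i,\mathbf A_i\mathbf z_i\rangle+\frac c2\|\mathbf A_i\mathbf z_i\|^2$, $\mathcal L=\sum_i\mathcal L_i$. Algorithm SP-ADMM-JCNL (parameters $c,\rho>0$; arbitrary $\mathbf z^0,\mathbf w^0$, $\boldsymbol\lambda^0=\mathbf 0$):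 for $t\ge0$, $\mathbf z^{t+1}=\arg\min_{\mathbf z\in\mathcal X\cap\mathcal Y}\sum_i[\mathcal L_i(\mathbf z_i,\mathbf w_i^t,\boldsymbol\lambda_i^t)+\frac c2\|\mathbf z_i-\mathbf z_i^t\|^2_{\mathbf S_i}]$; $\mathbf w^{t+1}=\arg\min_{\mathbf w}\sum_i[\mathcal L_i(\mathbf z_i^{t+1},\mathbf w_i,\boldsymbol\lambda_i^t)+\frac\rho2\|\mathbf w_i-\mathbf w_i^t\|^2]$, i.e. $\mathbf w_i^{t+1}=\mathrm{proj}_{\mathcal B^{N_i+1}}(\mathbf w_i^t+\rho^{-1}\mathbf D_i\mathbf H_i\mathbf z_i^{t+1})$; $\boldsymbol\lambda_i^{t+1}=\boldsymbol\lambda_i^t+c\mathbf A_i\mathbf z_i^{t+1}$. Auxiliary sequence: $\tilde{\mathbf z}_i^{t+1}=\mathbf U_i^{-1}(\mathbf H_i^T\mathbf D_i\mathbf w_i^t-\mathbf A_i^T\boldsymbol\lambda_i^t+c\mathbf S_i\mathbf z_i^t)$ for $t\ge0$. Increments: $\Delta\mathbf z_i^t=\mathbf z_i^t-\mathbf z_i^{t-1}$, $\Delta\mathbf w_i^t=\mathbf w_i^t-\mathbf w_i^{t-1}$, $\Delta\tilde{\mathbf z}_i^t=\tilde{\mathbf z}_i^t-\tilde{\mathbf z}_i^{t-1}$, $\Delta\boldsymbol\lambda_i^t=\boldsymbol\lambda_i^t-\boldsymbol\lambda_i^{t-1}$. *)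

From HB Require Import structures.
From mathcomp Require Import all_boot all_order all_algebra.
Set Implicit Arguments. Unset Strict Implicit. Unset Printing Implicit Defensive.
Import Order.TTheory GRing.Theory Num.Theory.
Local Open Scope ring_scope.

(* ---------- generic block linear algebra ---------------------------------
   A vector of R^{|T| n} is a family T -> 'rV_n of blocks; every matrix of the
   paper has the form M (x) I_n, and is represented by its block kernel
   M : U -> T -> R (entry of M in row u, column t).  Entrywise absolute value
   commutes with (x) I_n, so |M (x) I_n| = |M| (x) I_n. *)
Section Blocks.
Variables (R : realFieldType) (n : nat).

Definition vdot (u v : 'rV[R]_n) : R := \sum_k u ord0 k * v ord0 k.
Definition vnorm2 (v : 'rV[R]_n) : R := vdot v v.

Definition kapp (T U : finType) (M : U -> T -> R) (z : T -> 'rV[R]_n)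
  : U -> 'rV[R]_n := fun u => \sum_t M u t *: z t.
Definition bdot (T : finType) (z1 z2 : T -> 'rV[R]_n) : R :=
  \sum_t vdot (z1 t) (z2 t).
Definition bnorm2 (T : finType) (z : T -> 'rV[R]_n) : R := bdot z z.
Definition bqf (T : finType) (M : T -> T -> R) (z : T -> 'rV[R]_n) : R :=
  \sum_t \sum_s M t s * vdot (z t) (z s).
Definition bsub (T : finType) (z1 z2 : T -> 'rV[R]_n) : T -> 'rV[R]_n :=
  fun t => z1 t - z2 t.
End Blocks.

Section Kernels.
Variable (R : realFieldType).
Definition ktr (T U : finType) (M : U -> T -> R) : T -> U -> R := fun t u => M u t.
Definition kmul (T U V : finType) (M : U -> T -> R) (M' : T -> V -> R)
  : U -> V -> R := fun u v => \sum_t M u t * M' t v.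
Definition kabs (T U : finType) (M : U -> T -> R) : U -> T -> R :=
  fun u t => `|M u t|.
End Kernels.

Section Network.
Variables (R : realFieldType) (N n : nat) (adj : rel 'I_N).

Definition Ndeg (i : 'I_N) : nat := #|[pred j | adj i j]|.
Definition Nmax : nat := \max_(i < N) Ndeg i.

(* Block indices of z_i: (0,i) = x_i, (1,j) = p^-_{i,j}, (2,j) = p^+_{i,j},
   (3,i) = y_i, (4,j) = q^-_{i,j}, (5,j) = q^+_{i,j}, for j in N_i. *)
Definition zvalid (i : 'I_N) (b : 'I_6 * 'I_N) : bool :=
  if (nat_of_ord b.1 == 0%N) || (nat_of_ord b.1 == 3%N) then b.2 == i
  else adj i b.2.
Definition Zi (i : 'I_N) := {b : 'I_6 * 'I_N | zvalid i b}.

(* Block indices of H_i z_i and of w_i = ((v_{i,j})_j, u_i):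
   Some j (j in N_i) and None. *)
Definition hvalid (i : 'I_N) (o : option 'I_N) : bool :=
  if o is Some j then adj i j else true.
Definition Hi (i : 'I_N) := {o : option 'I_N | hvalid i o}.

(* Block indices of A_i z_i (and of lambda_i): (0,j), (1,j), (2,j), j in N_i *)
Definition Ai (i : 'I_N) := {o : 'I_3 * 'I_N | adj i o.2}.

Definition isblk (b : 'I_6 * 'I_N) (k : nat) (j : 'I_N) : R :=
  if (nat_of_ord b.1 == k) && (b.2 == j) then 1 else 0.

(* H_i z_i = ((x_i - p^+_{i,j})_j, x_i - y_i) *)
Definition Hmat (i : 'I_N) : Hi i -> Zi i -> R := fun o b =>
  match val o with
  | Some j => isblk (val b) 0 i - isblk (val b) 2 j
  | None => isblk (val b) 0 i - isblk (val b) 3 i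
  end.
Arguments Hmat i : clear implicits.

(* A_i z_i = ((x_i - p^-_{i,j})_j, (y_i - q^-_{i,j})_j, (y_i - q^+_{i,j})_j) *)
Definition Amat (i : 'I_N) : Ai i -> Zi i -> R := fun o b =>
  let j := (val o).2 in
  match nat_of_ord (val o).1 with
  | 0 => isblk (val b) 0 i - isblk (val b) 1 j
  | 1 => isblk (val b) 3 i - isblk (val b) 4 j
  | _ => isblk (val b) 3 i - isblk (val b) 5 j
  end.
Arguments Amat i : clear implicits.

Definition Dmat (d : 'I_N -> 'I_N -> R) (r : 'I_N -> R) (i : 'I_N)
  : Hi i -> Hi i -> R := fun o1 o2 =>
  if o1 == o2 then (match val o1 with Some j => d i j | None => r i end)
  else 0.
Arguments Dmat d r i : clear implicits.

Definition Smat (c : R) (i : 'I_N) : Zi i -> Zi i -> R := fun b1 b2 =>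
  kabs (kmul (ktr (Amat i)) (Amat i)) b1 b2
  + c^-1 * kabs (kmul (ktr (Hmat i)) (Hmat i)) b1 b2.
Arguments Smat c i : clear implicits.
Definition AtA (i : 'I_N) : Zi i -> Zi i -> R := kmul (ktr (Amat i)) (Amat i).
Arguments AtA i : clear implicits.
Definition Umat (c : R) (i : 'I_N) : Zi i -> Zi i -> R := fun b1 b2 =>
  kmul (ktr (Hmat i)) (Hmat i) b1 b2 + c * AtA i b1 b2 + c * Smat c i b1 b2.
Arguments Umat c i : clear implicits.

Definition zconf := forall i : 'I_N, Zi i -> 'rV[R]_n.
Definition wconf := forall i : 'I_N, Hi i -> 'rV[R]_n.
Definition lconf := forall i : 'I_N, Ai i -> 'rV[R]_n.

Definition Gi d r (i : 'I_N) (zi : Zi i -> 'rV[R]_n) (wi : Hi i -> 'rV[R]_n) : R :=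
  2^-1 * bnorm2 (kapp (Hmat i) zi) - bdot wi (kapp (Dmat d r i) (kapp (Hmat i) zi)).
Arguments Gi d r i zi wi : clear implicits.

(* L_i without the indicator term delta_{B^{N_i+1}}(w_i) *)
Definition Li d r (c : R) (i : 'I_N) (zi : Zi i -> 'rV[R]_n)
  (wi : Hi i -> 'rV[R]_n) (li : Ai i -> 'rV[R]_n) : R :=
  Gi d r i zi wi + bdot li (kapp (Amat i) zi)
  + c / 2 * bnorm2 (kapp (Amat i) zi).
Arguments Li d r c i zi wi li : clear implicits.

Definition Lag d r (c : R) (z : zconf) (w : wconf) (l : lconf) : R :=
  \sum_(i < N) Li d r c i (z i) (w i) (l i).

Definition inballs (i : 'I_N) (wi : Hi i -> 'rV[R]_n) : Prop :=
  forall o, vnorm2 (wi o) <= 1.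
Arguments inballs i wi : clear implicits.

Definition inX (anchors : {set 'I_N}) (a : 'I_N -> 'rV[R]_n) (z : zconf) : Prop :=
  forall i, i \in anchors -> forall b : Zi i, val b = (inord 0, i) -> z i b = a i.

Definition inY (z : zconf) : Prop :=
  forall (i j : 'I_N) (bi : Zi i) (bj : Zi j),
    ((val bi = (inord 2, j) /\ val bj = (inord 1, i)) \/
     (val bi = (inord 5, j) /\ val bj = (inord 4, i))) ->
    z i bi = z j bj.

Definition zobj d r (c : R) (zt : zconf) (wt : wconf) (lt : lconf) (z : zconf) : R :=
  \sum_(i < N) (Li d r c i (z i) (wt i) (lt i)
                + c / 2 * bqf (Smat c i) (bsub (z i) (zt i))).

(* objective of the w-subproblem (indicator encoded as the constraint inballs) *)
Definition wobj d r (c rho : R) (z1 : zconf) (wt : wconf) (lt : lconf) (w : wconf) : R :=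
  \sum_(i < N) (Li d r c i (z1 i) (w i) (lt i) + rho / 2 * bnorm2 (bsub (w i) (wt i))).

End Network.

Arguments Hmat {R N adj} i _ _.
Arguments Amat {R N adj} i _ _.
Arguments AtA {R N adj} i _ _.
Arguments Smat {R N adj} c i _ _.
Arguments Umat {R N adj} c i _ _.
Arguments Dmat {R N adj} d r i _ _.
Arguments Gi {R N n adj} d r i zi wi.
Arguments Li {R N n adj} d r c i zi wi li.
Arguments inballs {R N n adj} i wi.
Arguments zconf R {N} n adj.
Arguments wconf R {N} n adj.
Arguments lconf R {N} n adj.

From HB Require Import structures.
From mathcomp Require Import all_boot all_order all_algebra.
From mathcomp Require Import ring lra.
Import Order.TTheory GRing.Theory Num.Theory.
Local Open Scope ring_scope.
Set Implicit Arguments. Unset Strict Implicit. Unset Printing Implicit Defensive.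

(* The z- and w-steps are exact minimisations, so comparing each minimiser
   with the previous (feasible) iterate yields the descent terms
   [-c/2 |dz|_S^2 - rho/2 |dw|^2].  The dual step raises [L] by
   [c |A_i z_i|^2 = |dlam_i|^2 / c].  Subtracting the defining equations of
   [z~^{t+1}] and [z~^t] writes [A_i^T dlam_i] as
   [H_i^T (H_i dz~ - D_i dw) + c A_i^T A_i (dz~ - dz) + c S_i (dz~ - dz^t)],
   and [A_i A_i^T >= I] gives [|dlam_i|^2 <= |A_i^T dlam_i|^2 <= 3 (...)].
   Finally [A_i], [H_i] are oriented incidence matrices of multigraphs on the
   blocks of [z_i], and [|A_i^T A_i|], [|H_i^T H_i|] are the Gram matrices of
   the unoriented ones; for such matrices [|M^T w|^2 <= (1 + K) |w|^2] when
   every block is the tail of at most [K] edges, which gives the factors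
   [2 N_i + 1] and [N_i + 2]. *)

Section InnerProduct.
Variables (R : realFieldType) (n : nat).
Implicit Types (u v w : 'rV[R]_n) (a e : R).

Lemma vdotC u v : vdot u v = vdot v u.
Proof. by apply: eq_bigr => k _; rewrite mulrC. Qed.

Lemma vdotDl u v w : vdot (u + v) w = vdot u w + vdot v w.
Proof. by rewrite /vdot -big_split; apply: eq_bigr => k _; rewrite mxE mulrDl. Qed.

Lemma vdotZl a u w : vdot (a *: u) w = a * vdot u w.
Proof. by rewrite /vdot mulr_sumr; apply: eq_bigr => k _; rewrite mxE mulrA. Qed.

Lemma vdotNl u w : vdot (- u) w = - vdot u w.
Proof. by rewrite -scaleN1r vdotZl mulN1r. Qed.

Lemma vdotDr u v w : vdot w (u + v) = vdot w u + vdot w v.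
Proof. by rewrite !(vdotC w) vdotDl. Qed.

Lemma vdotZr a u w : vdot w (a *: u) = a * vdot w u.
Proof. by rewrite !(vdotC w) vdotZl. Qed.

Lemma vdotNr u w : vdot w (- u) = - vdot w u.
Proof. by rewrite !(vdotC w) vdotNl. Qed.

Lemma vdot0l w : vdot 0 w = 0.
Proof. by rewrite -(scale0r (0 : 'rV_n)) vdotZl mul0r. Qed.

Lemma vdot_suml (I : finType) (F : I -> 'rV[R]_n) w :
  vdot (\sum_i F i) w = \sum_i vdot (F i) w.
Proof.
rewrite /vdot (eq_bigr (fun k => \sum_i F i ord0 k * w ord0 k)); last first.
  by move=> k _; rewrite summxE big_distrl.
exact: exchange_big.
Qed.

Lemma vdot_sumr (I : finType) (F : I -> 'rV[R]_n) w :
  vdot w (\sum_i F i) = \sum_i vdot w (F i).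
Proof. by rewrite vdotC vdot_suml; apply: eq_bigr => i _; rewrite vdotC. Qed.

Lemma vnorm2_ge0 u : 0 <= vnorm2 u.
Proof. by apply: sumr_ge0 => k _; rewrite -expr2 sqr_ge0. Qed.

Lemma vnorm2Z a u : vnorm2 (a *: u) = a * a * vnorm2 u.
Proof. by rewrite /vnorm2 vdotZl vdotZr mulrA. Qed.

Lemma vdot_young e u v : 0 < e -> 2 * vdot u v <= e * vnorm2 u + e^-1 * vnorm2 v.
Proof.
move=> e_gt0; have := vnorm2_ge0 (e *: u - v).
rewrite /vnorm2 !vdotDl !vdotDr !vdotNl !vdotNr !vdotZl !vdotZr (vdotC v) => h.
by rewrite -(ler_pM2l e_gt0) mulrDr !mulrA mulfV ?gt_eqF // mul1r; lra.
Qed.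

Lemma vnorm2_wsum_le (I : finType) (c : I -> R) (f : I -> 'rV[R]_n) :
  (forall i, 0 <= c i) ->
  vnorm2 (\sum_i c i *: f i) <= (\sum_i c i) * (\sum_i c i * vnorm2 (f i)).
Proof.
move=> c_ge0; set rhs := (_ * _).
have -> : vnorm2 (\sum_i c i *: f i) = \sum_i \sum_j (c i * c j) * vdot (f i) (f j).
  rewrite /vnorm2 vdot_suml; apply: eq_bigr => i _.
  rewrite vdotZl vdot_sumr mulr_sumr; apply: eq_bigr => j _.
  by rewrite vdotZr mulrA.
have rhs_l : rhs = \sum_i \sum_j (c i * c j) * vnorm2 (f j).
  rewrite /rhs mulr_suml; apply: eq_bigr => i _; rewrite mulr_sumr.
  by apply: eq_bigr => j _; rewrite mulrA.
have rhs_r : rhs = \sum_i \sum_j (c i * c j) * vnorm2 (f i).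
  rewrite /rhs mulrC mulr_suml; apply: eq_bigr => i _; rewrite mulr_sumr.
  by apply: eq_bigr => j _; rewrite mulrAC.
have -> : rhs = \sum_i \sum_j (c i * c j) * ((vnorm2 (f i) + vnorm2 (f j)) / 2).
  transitivity ((rhs + rhs) / 2); first by field.
  rewrite [X in X + _]rhs_r [X in _ + X]rhs_l -big_split mulr_suml.
  apply: eq_bigr => i _; rewrite -big_split mulr_suml.
  by apply: eq_bigr => j _ /=; ring.
apply: ler_sum => i _; apply: ler_sum => j _; apply: ler_wpM2l; first exact: mulr_ge0.
by have := vdot_young (f i) (f j) ltr01; rewrite invr1 !mul1r; lra.
Qed.

End InnerProduct.

Section BlockVectors.
Variables (R : realFieldType) (n : nat).
Implicit Types (T U V : finType) (a e : R).

Lemma bdot_ext T (z1 z2 w1 w2 : T -> 'rV[R]_n) :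
  z1 =1 z2 -> w1 =1 w2 -> bdot z1 w1 = bdot z2 w2.
Proof. by move=> ez ew; apply: eq_bigr => t _; rewrite ez ew. Qed.

Lemma bnorm2_ext T (z1 z2 : T -> 'rV[R]_n) : z1 =1 z2 -> bnorm2 z1 = bnorm2 z2.
Proof. by move=> ez; apply: bdot_ext. Qed.

Lemma bdotDl T (z1 z2 w : T -> 'rV[R]_n) :
  bdot (fun t => z1 t + z2 t) w = bdot z1 w + bdot z2 w.
Proof. by rewrite /bdot -big_split; apply: eq_bigr => t _; rewrite vdotDl. Qed.

Lemma bdotZl T a (z w : T -> 'rV[R]_n) : bdot (fun t => a *: z t) w = a * bdot z w.
Proof. by rewrite /bdot mulr_sumr; apply: eq_bigr => t _; rewrite vdotZl. Qed.

Lemma bnorm2_ge0 T (z : T -> 'rV[R]_n) : 0 <= bnorm2 z.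
Proof. by apply: sumr_ge0 => t _; apply: vnorm2_ge0. Qed.

Lemma bnorm2Z T a (z : T -> 'rV[R]_n) : bnorm2 (fun t => a *: z t) = a * a * bnorm2 z.
Proof. by rewrite /bnorm2 /bdot mulr_sumr; apply: eq_bigr => t _; apply: vnorm2Z. Qed.

Lemma bnorm2_add_le T e (x y : T -> 'rV[R]_n) : 0 < e ->
  bnorm2 (fun t => x t + y t) <= (1 + e) * bnorm2 x + (1 + e^-1) * bnorm2 y.
Proof.
move=> e_gt0; rewrite /bnorm2 /bdot !mulr_sumr -big_split; apply: ler_sum => t _ /=.
have := vdot_young (x t) (y t) e_gt0.
by rewrite /vnorm2 !vdotDl !vdotDr (vdotC (y t)); lra.
Qed.

Lemma bnorm2_add3_le T (x y z : T -> 'rV[R]_n) :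
  bnorm2 (fun t => x t + y t + z t) <= 3 * (bnorm2 x + bnorm2 y + bnorm2 z).
Proof.
rewrite /bnorm2 /bdot -!big_split mulr_sumr; apply: ler_sum => t _ /=.
have := vdot_young (x t) (y t) ltr01; have := vdot_young (x t) (z t) ltr01.
have := vdot_young (y t) (z t) ltr01; rewrite invr1 !mul1r.
by rewrite /vnorm2 !vdotDl !vdotDr (vdotC (y t) (x t)) (vdotC (z t)) (vdotC (z t)); lra.
Qed.

Lemma kapp_ext T U (M1 M2 : U -> T -> R) (z1 z2 : T -> 'rV[R]_n) u :
  M1 u =1 M2 u -> z1 =1 z2 -> kapp M1 z1 u = kapp M2 z2 u.
Proof. by move=> eM ez; apply: eq_bigr => t _; rewrite eM ez. Qed.

Lemma bnorm2_kappT_ext T U (M1 M2 : U -> T -> R) (w : U -> 'rV[R]_n) :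
  (forall u t, M1 u t = M2 u t) -> bnorm2 (kapp (ktr M1) w) = bnorm2 (kapp (ktr M2) w).
Proof. by move=> eM; apply: bnorm2_ext => t; apply: kapp_ext => // u; rewrite /ktr eM. Qed.

Lemma kappD T U (M : U -> T -> R) (z1 z2 : T -> 'rV[R]_n) u :
  kapp M (fun t => z1 t + z2 t) u = kapp M z1 u + kapp M z2 u.
Proof. by rewrite /kapp -big_split; apply: eq_bigr => t _; rewrite scalerDr. Qed.

Lemma kappZ T U (M : U -> T -> R) a (z : T -> 'rV[R]_n) u :
  kapp M (fun t => a *: z t) u = a *: kapp M z u.
Proof. by rewrite /kapp scaler_sumr; apply: eq_bigr => t _; rewrite !scalerA mulrC. Qed.

Lemma kappB T U (M : U -> T -> R) (z1 z2 : T -> 'rV[R]_n) u :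
  kapp M (bsub z1 z2) u = kapp M z1 u - kapp M z2 u.
Proof.
rewrite /bsub kappD -scaleN1r -kappZ.
by congr (_ + _); apply: kapp_ext => // t; rewrite scaleN1r.
Qed.

Lemma kapp_kappB T U V (M : U -> T -> R) (M' : T -> V -> R) (z1 z2 : V -> 'rV[R]_n) u :
  kapp M (kapp M' (bsub z1 z2)) u = kapp M (kapp M' z1) u - kapp M (kapp M' z2) u.
Proof. by rewrite -kappB; apply: kapp_ext => // t; apply: kappB. Qed.

Lemma bqf_bsubss T (M : T -> T -> R) (z : T -> 'rV[R]_n) : bqf M (bsub z z) = 0.
Proof. by apply: big1 => t _; apply: big1 => s _; rewrite /bsub !subrr vdot0l mulr0. Qed.

Lemma bnorm2_bsubss T (z : T -> 'rV[R]_n) : bnorm2 (bsub z z) = 0.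
Proof. by apply: big1 => t _; rewrite /bsub subrr vdot0l. Qed.

Lemma kappKD T U (M1 M2 : U -> T -> R) (z : T -> 'rV[R]_n) u :
  kapp (fun u t => M1 u t + M2 u t) z u = kapp M1 z u + kapp M2 z u.
Proof. by rewrite /kapp -big_split; apply: eq_bigr => t _; rewrite scalerDl. Qed.

Lemma kappKZ T U (M : U -> T -> R) a (z : T -> 'rV[R]_n) u :
  kapp (fun u t => a * M u t) z u = a *: kapp M z u.
Proof. by rewrite /kapp scaler_sumr; apply: eq_bigr => t _; rewrite scalerA. Qed.

Lemma kapp_kmul T U V (M : U -> T -> R) (M' : T -> V -> R) (z : V -> 'rV[R]_n) u :
  kapp M (kapp M' z) u = kapp (kmul M M') z u.
Proof.
rewrite /kapp /kmul (eq_bigr (fun t => \sum_v (M u t * M' t v) *: z v)); last first.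
  by move=> t _; rewrite scaler_sumr; apply: eq_bigr => v _; rewrite scalerA.
by rewrite exchange_big; apply: eq_bigr => v _; rewrite scaler_suml.
Qed.

Lemma bdot_kapp T U (M : U -> T -> R) (z : T -> 'rV[R]_n) (w : U -> 'rV[R]_n) :
  bdot (kapp M z) w = bdot z (kapp (ktr M) w).
Proof.
rewrite /bdot /kapp /ktr (eq_bigr (fun u => \sum_t M u t * vdot (z t) (w u))).
  rewrite exchange_big; apply: eq_bigr => t _; rewrite vdot_sumr.
  by apply: eq_bigr => u _; rewrite vdotZr.
by move=> u _; rewrite vdot_suml; apply: eq_bigr => t _; rewrite vdotZl.
Qed.

Lemma bqf_ext T (M1 M2 : T -> T -> R) (z : T -> 'rV[R]_n) :
  (forall t s, M1 t s = M2 t s) -> bqf M1 z = bqf M2 z.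
Proof. by move=> eM; apply: eq_bigr => t _; apply: eq_bigr => s _; rewrite eM. Qed.

Lemma bqfKD T (M1 M2 : T -> T -> R) (z : T -> 'rV[R]_n) :
  bqf (fun t s => M1 t s + M2 t s) z = bqf M1 z + bqf M2 z.
Proof.
rewrite /bqf -big_split; apply: eq_bigr => t _; rewrite -big_split.
by apply: eq_bigr => s _; rewrite mulrDl.
Qed.

Lemma bqfKZ T (M : T -> T -> R) a (z : T -> 'rV[R]_n) :
  bqf (fun t s => a * M t s) z = a * bqf M z.
Proof.
rewrite /bqf mulr_sumr; apply: eq_bigr => t _; rewrite mulr_sumr.
by apply: eq_bigr => s _; rewrite mulrA.
Qed.

Lemma bnorm2_kapp T U (M : U -> T -> R) (z : T -> 'rV[R]_n) :
  bnorm2 (kapp M z) = bqf (kmul (ktr M) M) z.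
Proof.
rewrite /bnorm2 bdot_kapp /bqf /bdot; apply: eq_bigr => t _.
rewrite kapp_kmul /kapp vdot_sumr; apply: eq_bigr => s _; exact: vdotZr.
Qed.

Lemma bqf_gram_ge0 T U (M : U -> T -> R) (z : T -> 'rV[R]_n) :
  0 <= bqf (kmul (ktr M) M) z.
Proof. by rewrite -bnorm2_kapp bnorm2_ge0. Qed.

Lemma bnorm2_gram_le T U (M : U -> T -> R) (K : R) (v : T -> 'rV[R]_n) :
  (forall w : U -> 'rV[R]_n, bnorm2 (kapp (ktr M) w) <= K * bnorm2 w) ->
  bnorm2 (kapp (kmul (ktr M) M) v) <= K * bqf (kmul (ktr M) M) v.
Proof.
move=> MT_le; rewrite -bnorm2_kapp.
by rewrite (bnorm2_ext (fun t => esym (kapp_kmul _ _ _ t))) MT_le.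
Qed.

End BlockVectors.

Lemma sum_eq_natr_mul (R : realFieldType) (T : finType) (F : T -> R) a :
  \sum_t (t == a)%:R * F t = F a.
Proof.
by rewrite (bigD1 a) //= eqxx mul1r big1 ?addr0 // => t /negbTE ->; rewrite mul0r.
Qed.

Section Incidence.
Variables (R : realFieldType) (n : nat) (T U : finType) (r1 r2 : U -> T).
Implicit Types (s : R) (w : U -> 'rV[R]_n).

(* For [s = -1], the oriented incidence matrix of the multigraph with edges
   [u : r1 u -> r2 u]; for [s = 1], the unoriented one. *)
Definition incidence s : U -> T -> R :=
  fun u t => (t == r1 u)%:R + s * (t == r2 u)%:R.

Lemma sum_incidence_mul s u (F : T -> R) :
  \sum_t incidence s u t * F t = F (r1 u) + s * F (r2 u).
Proof.
rewrite /incidence; under eq_bigr => t _ do rewrite mulrDl -mulrA.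
by rewrite big_split /= -mulr_sumr !sum_eq_natr_mul.
Qed.

Hypotheses (r1_neq_r2 : forall u u', r1 u != r2 u') (r2_inj : injective r2).

Lemma incidence_gram s u u' : s * s = 1 ->
  kmul (incidence s) (ktr (incidence s)) u u' = (r1 u == r1 u')%:R + (u == u')%:R.
Proof.
move=> s2; rewrite /kmul /ktr sum_incidence_mul /incidence.
rewrite (negbTE (r1_neq_r2 u u')) [r2 u == r1 u']eq_sym (negbTE (r1_neq_r2 u' u)).
by rewrite (inj_eq r2_inj) !mulr0 !addr0 add0r mulrA s2 mul1r.
Qed.

Lemma bqf_fiber (f : U -> T) w :
  bqf (fun u u' => (f u == f u')%:R) w = \sum_t vnorm2 (\sum_u (f u == t)%:R *: w u).
Proof.
symmetry; under eq_bigr => t _ do rewrite /vnorm2 vdot_suml.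
rewrite exchange_big; apply: eq_bigr => u _ /=.
under eq_bigr => t _ do rewrite vdotZl vdot_sumr mulr_sumr.
rewrite exchange_big; apply: eq_bigr => u' _ /=.
under eq_bigr => t _ do rewrite vdotZr mulrA.
rewrite -mulr_suml [f u == f u']eq_sym.
rewrite -(sum_eq_natr_mul (fun t => (f u' == t)%:R) (f u)).
by congr (_ * _); apply: eq_bigr => t _; rewrite eq_sym.
Qed.

Lemma bnorm2_incidenceT s w : s * s = 1 ->
  bnorm2 (kapp (ktr (incidence s)) w)
  = bnorm2 w + \sum_t vnorm2 (\sum_u (r1 u == t)%:R *: w u).
Proof.
move=> s2; rewrite bnorm2_kapp (bqf_ext _ (fun u u' => incidence_gram u u' s2)).
rewrite bqfKD -bqf_fiber addrC; congr (_ + _).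
apply: eq_bigr => u _; rewrite -(sum_eq_natr_mul (fun u' => vdot (w u) (w u'))).
by apply: eq_bigr => u' _; rewrite eq_sym.
Qed.

Lemma incidenceT_lb s w : s * s = 1 -> bnorm2 w <= bnorm2 (kapp (ktr (incidence s)) w).
Proof.
by move=> s2; rewrite bnorm2_incidenceT // lerDl sumr_ge0 // => t _; apply: vnorm2_ge0.
Qed.

Lemma incidenceT_ub s (K : R) w : s * s = 1 -> 0 <= K ->
  (forall t, \sum_u ((r1 u == t)%:R : R) <= K) ->
  bnorm2 (kapp (ktr (incidence s)) w) <= (1 + K) * bnorm2 w.
Proof.
move=> s2 K_ge0 fiberK; rewrite bnorm2_incidenceT // mulrDl mul1r lerD2l.
have -> : K * bnorm2 w = \sum_t K * \sum_u (r1 u == t)%:R * vnorm2 (w u).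
  rewrite -mulr_sumr exchange_big /=; congr (_ * _); apply: eq_bigr => u _.
  rewrite -mulr_suml -[LHS]mul1r; congr (_ * _).
  rewrite -[LHS](sum_eq_natr_mul (fun=> 1) (r1 u)).
  by apply: eq_bigr => t _; rewrite mulr1 eq_sym.
apply: ler_sum => t _.
apply: le_trans (vnorm2_wsum_le w (fun u => ler0n _ (r1 u == t))) _.
apply: ler_wpM2r; last exact: fiberK.
by apply: sumr_ge0 => u _; rewrite mulr_ge0 ?ler0n ?vnorm2_ge0.
Qed.

End Incidence.

(* Flipping the orientation of every edge changes only the signs of the
   off-diagonal entries of the Gram matrix, which are nonpositive. *)
Lemma abs_gram_incidence (R : realFieldType) (T U : finType) (r1 r2 : U -> T) t t' :
  (forall u, r1 u != r2 u) ->
  kabs (kmul (ktr (incidence r1 r2 (-1))) (incidence r1 r2 (-1))) t t'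
  = kmul (ktr (incidence r1 r2 1)) (incidence r1 r2 (1 : R)) t t'.
Proof.
move=> r12; rewrite /kabs /kmul /ktr.
have sign (u : U) : incidence r1 r2 (-1 : R) u t * incidence r1 r2 (-1) u t'
    = (if t == t' then 1 else -1) * (incidence r1 r2 (1 : R) u t * incidence r1 r2 1 u t').
  have ex (x : T) : ~~ ((x == r1 u) && (x == r2 u)).
    by apply/negP => /andP[/eqP e1 /eqP e2]; move: (r12 u); rewrite -e1 -e2 eqxx.
  rewrite /incidence; have [<-|tt'] := eqVneq t t'.
    by move: (ex t); case: (t == r1 u); case: (t == r2 u) => //= _; ring.
  have e1 : ~~ ((t == r1 u) && (t' == r1 u)).
    by apply/negP => /andP[/eqP e /eqP e']; rewrite e e' eqxx in tt'.
  have e2 : ~~ ((t == r2 u) && (t' == r2 u)).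
    by apply/negP => /andP[/eqP e /eqP e']; rewrite e e' eqxx in tt'.
  move: (ex t) (ex t') e1 e2.
  by case: (t == r1 u); case: (t == r2 u); case: (t' == r1 u); case: (t' == r2 u)
    => //= _ _ _ _; ring.
rewrite (eq_bigr _ (fun u _ => sign u)) -mulr_sumr normrM [X in _ * X]ger0_norm.
  by case: (t == t'); rewrite ?normrN normr1 mul1r.
by apply: sumr_ge0 => u _; rewrite mulr_ge0 // addr_ge0 ?mul1r ?ler0n.
Qed.

Lemma sum_option (R : realFieldType) (T : finType) (F : option T -> R) :
  \sum_o F o = F None + \sum_x F (Some x).
Proof.
rewrite (bigD1 None) //=; congr (_ + _).
rewrite (reindex_omap (Some : T -> option T) id) /=; last by case.
by apply: eq_bigl => x; rewrite eqxx.
Qed.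

Section NodeIncidence.
Variables (R : realFieldType) (N : nat) (adj : rel 'I_N) (i : 'I_N).
Local Notation Zi := (Zi adj i).
Local Notation Ai := (Ai adj i).
Local Notation Hi := (Hi adj i).

Lemma eq_Zi (b e : Zi) :
  (b == e) = (nat_of_ord (val b).1 == (val e).1) && ((val b).2 == (val e).2).
Proof. by case: b e => [[b1 b2] ?] [[e1 e2] ?]; rewrite -val_eqE /= xpair_eqE. Qed.

Fact x_blk_valid : zvalid adj i (inord 0, i). Proof. by rewrite /zvalid /= inordK ?eqxx. Qed.
Fact y_blk_valid : zvalid adj i (inord 3, i). Proof. by rewrite /zvalid /= inordK ?eqxx. Qed.
Definition x_blk : Zi := exist (zvalid adj i) _ x_blk_valid.
Definition y_blk : Zi := exist (zvalid adj i) _ y_blk_valid.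

(* Row [(k, j)] of [A_i] is [x_i - p^-_{i,j}], [y_i - q^-_{i,j}] or
   [y_i - q^+_{i,j}], i.e. block [1], [4] or [5] of neighbour [j]. *)
Definition A_neg_type (k : 'I_3) : nat := nth 5%N [:: 1; 4]%N k.

Fact A_neg_valid (u : Ai) : zvalid adj i (inord (A_neg_type (val u).1), (val u).2).
Proof.
by case: u => -[[[|[|[|?]]] ?] j] /= adj_ij; rewrite /zvalid /= inordK.
Qed.

Definition A_pos (u : Ai) : Zi := if nat_of_ord (val u).1 == 0%N then x_blk else y_blk.
Definition A_neg (u : Ai) : Zi := exist (zvalid adj i) _ (A_neg_valid u).

Definition H_neg_blk (o : option 'I_N) : 'I_6 * 'I_N :=
  if o is Some j then (inord 2, j) else (inord 3, i).

Fact H_neg_valid (u : Hi) : zvalid adj i (H_neg_blk (val u)).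
Proof. by case: u => [[j|] ?]; rewrite /zvalid /= inordK ?eqxx. Qed.

Definition H_pos (u : Hi) : Zi := x_blk.
Definition H_neg (u : Hi) : Zi := exist (zvalid adj i) _ (H_neg_valid u).

Lemma isblkE (b : 'I_6 * 'I_N) k j :
  isblk R b k j = ((nat_of_ord b.1 == k) && (b.2 == j))%:R.
Proof. by rewrite /isblk; case: ifP. Qed.

Lemma Amat_incidence u b : Amat i u b = incidence A_pos A_neg (-1 : R) u b.
Proof.
case: u => -[[[|[|[|?]]] ?] j] ? //=.
all: by rewrite /Amat /incidence /= !eq_Zi !isblkE mulN1r /= !inordK.
Qed.

Lemma Hmat_incidence u b : Hmat i u b = incidence H_pos H_neg (-1 : R) u b.
Proof.
by case: u => [[j|] ?]; rewrite /Hmat /incidence /= !eq_Zi !isblkE mulN1r /= !inordK.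
Qed.

Lemma A_pos_neq_neg u u' : A_pos u != A_neg u'.
Proof.
rewrite eq_Zi negb_and /A_pos /=; case: ifP => _; rewrite /= !inordK //.
all: by case: u' => -[[[|[|[|?]]] ?] j] ? /=.
Qed.

Lemma A_neg_inj : injective A_neg.
Proof.
move=> -[[[[|[|[|?]]] ?] j] ?] -[[[[|[|[|?]]] ?] j'] ?] //= /eqP.
all: rewrite eq_Zi /= !inordK //= => /eqP ej; apply: val_inj; rewrite /= ej.
all: by congr (_, _); apply: val_inj.
Qed.

Lemma H_pos_neq_neg u u' : H_pos u != H_neg u'.
Proof. by rewrite eq_Zi negb_and; case: u' => [[j|] ?]; rewrite /= !inordK. Qed.

Lemma H_neg_inj : injective H_neg.
Proof.
move=> [[j|] ?] [[j'|] ?] /eqP; rewrite eq_Zi /= !inordK //= => ej.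
all: by apply: val_inj; rewrite /= ?(eqP ej).
Qed.

Lemma sum_adj : \sum_j ((adj i j)%:R : R) = (Ndeg adj i)%:R.
Proof.
rewrite /Ndeg -sum1_card natr_sum [RHS]big_mkcond /=; apply: eq_bigr => j _.
by rewrite inE; case: (adj i j).
Qed.

(* The variables [x_i] and [y_i] carry [N_i] and [2 N_i] rows of [A_i]. *)
Lemma A_fiber_le t : \sum_u ((A_pos u == t)%:R : R) <= 2 * (Ndeg adj i)%:R.
Proof.
pose F (k : 'I_3) : R := ((if nat_of_ord k == 0%N then x_blk else y_blk) == t)%:R.
have -> : \sum_u ((A_pos u == t)%:R : R) = \sum_k (\sum_j (adj i j)%:R) * F k.
  under [RHS]eq_bigr => k _ do rewrite big_distrl.
  rewrite pair_bigA -(big_sub [pred e | adj i e.2] (fun e => F e.1)) big_mkcond /=.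
  by apply: eq_bigr => -[k j] _; rewrite inE; case: (adj i j); rewrite ?mul1r ?mul0r.
rewrite sum_adj -mulr_sumr mulrC ler_wpM2r // !big_ord_recl big_ord0 /F /=.
have y_neq_x : y_blk != x_blk by rewrite eq_Zi /= !inordK.
by case: eqP => [<-|_]; rewrite ?(negbTE y_neq_x) /=; case: (y_blk == t) => /=; lra.
Qed.

Lemma H_fiber_le t : \sum_u ((H_pos u == t)%:R : R) <= (Ndeg adj i)%:R + 1.
Proof.
apply: le_trans (_ : \sum_(u : Hi) 1 <= _); first by apply: ler_sum => u _; case: (_ == t).
rewrite (_ : \sum_u _ = \sum_(o in [pred o | hvalid adj i o]) 1); last by rewrite [RHS]big_sub.
rewrite big_mkcond sum_option addrC lerD2r -sum_adj.
by apply: ler_sum => j _; rewrite inE /=; case: (adj i j).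
Qed.

End NodeIncidence.

Arguments Amat_incidence {R N adj i} u b.
Arguments Hmat_incidence {R N adj i} u b.
Arguments A_fiber_le {R N adj i} t.
Arguments H_fiber_le {R N adj i} t.



Section NodeBounds.
Variables (R : realFieldType) (N n : nat) (adj : rel 'I_N) (i : 'I_N) (K : R).
Hypothesis deg_le : (Ndeg adj i)%:R <= K.
Local Notation A s := (incidence (@A_pos N adj i) (@A_neg N adj i) s).
Local Notation H s := (incidence (@H_pos N adj i) (@H_neg N adj i) s).

Let K_ge0 : 0 <= K := le_trans (ler0n _ _) deg_le.

Lemma incidenceA_ub s (w : Ai adj i -> 'rV[R]_n) : s * s = 1 ->
  bnorm2 (kapp (ktr (A s)) w) <= (1 + 2 * K) * bnorm2 w.
Proof.
move=> s2; apply: incidenceT_ub => //; first exact: A_pos_neq_neg.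
- exact: A_neg_inj.
- by rewrite mulr_ge0 ?K_ge0.
by move=> t; apply: le_trans (A_fiber_le t) _; rewrite ler_pM2l.
Qed.

Lemma incidenceH_ub s (w : Hi adj i -> 'rV[R]_n) : s * s = 1 ->
  bnorm2 (kapp (ktr (H s)) w) <= (K + 2) * bnorm2 w.
Proof.
move=> s2; rewrite (_ : K + 2 = 1 + (K + 1)); last by rewrite addrCA addrC.
apply: incidenceT_ub => //; first exact: H_pos_neq_neg.
- exact: H_neg_inj.
- by rewrite addr_ge0 ?K_ge0.
by move=> t; apply: le_trans (H_fiber_le t) _; rewrite lerD2r.
Qed.

Lemma Amat_lb (w : Ai adj i -> 'rV[R]_n) : bnorm2 w <= bnorm2 (kapp (ktr (Amat i)) w).
Proof.
rewrite (bnorm2_kappT_ext w Amat_incidence).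
by apply: incidenceT_lb; [exact: A_pos_neq_neg | exact: A_neg_inj | rewrite mulrNN mulr1].
Qed.

Lemma Hmat_ub (w : Hi adj i -> 'rV[R]_n) :
  bnorm2 (kapp (ktr (Hmat i)) w) <= (K + 2) * bnorm2 w.
Proof.
rewrite (bnorm2_kappT_ext w Hmat_incidence).
by apply: incidenceH_ub; rewrite mulrNN mulr1.
Qed.

Lemma AtA_sq_le (v : Zi adj i -> 'rV[R]_n) :
  bnorm2 (kapp (AtA i) v) <= (1 + 2 * K) * bqf (AtA i) v.
Proof.
apply: bnorm2_gram_le => w.
rewrite (bnorm2_kappT_ext w Amat_incidence).
by apply: incidenceA_ub; rewrite mulrNN mulr1.
Qed.

Lemma Smat_gram (c : R) b b' : Smat c i b b'
  = kmul (ktr (A 1)) (A 1) b b' + c^-1 * kmul (ktr (H 1)) (H 1) b b'.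
Proof.
have gram_abs (U : finType) (M M' : U -> Zi adj i -> R) : (forall u t, M u t = M' u t) ->
    kabs (kmul (ktr M) M) b b' = kabs (kmul (ktr M') M') b b'.
  by move=> eM; rewrite /kabs /kmul /ktr; congr `|_|; apply: eq_bigr => u _; rewrite !eM.
rewrite /Smat (gram_abs _ _ _ Amat_incidence) (gram_abs _ _ _ Hmat_incidence).
by rewrite !abs_gram_incidence // => u; [exact: H_pos_neq_neg | exact: A_pos_neq_neg].
Qed.

Lemma bqf_Smat (c : R) (v : Zi adj i -> 'rV[R]_n) :
  bqf (Smat c i) v = bqf (kmul (ktr (A 1)) (A 1)) v + c^-1 * bqf (kmul (ktr (H 1)) (H 1)) v.
Proof. by rewrite -bqfKZ -bqfKD; apply: bqf_ext => b b'; apply: Smat_gram. Qed.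

Lemma bqf_Smat_ge0 (c : R) (v : Zi adj i -> 'rV[R]_n) : 0 < c -> 0 <= bqf (Smat c i) v.
Proof. by move=> c_gt0; rewrite bqf_Smat addr_ge0 ?mulr_ge0 ?bqf_gram_ge0 ?invr_ge0 ?ltW. Qed.

Lemma Smat_sq_le (c : R) (v : Zi adj i -> 'rV[R]_n) : 0 < c ->
  c * c * bnorm2 (kapp (Smat c i) v) <= c * (1 + 2 * c) * (K + 2) * bqf (Smat c i) v.
Proof.
move=> c_gt0; have c_neq0 : c != 0 by rewrite gt_eqF.
pose P := kmul (ktr (A (1 : R))) (A 1); pose Q := kmul (ktr (H (1 : R))) (H 1).
have P_le : bnorm2 (kapp P v) <= (1 + 2 * K) * bqf P v.
  by apply: bnorm2_gram_le => w; apply: incidenceA_ub; rewrite mulr1.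
have Q_le : bnorm2 (kapp Q v) <= (K + 2) * bqf Q v.
  by apply: bnorm2_gram_le => w; apply: incidenceH_ub; rewrite mulr1.
have p_ge0 : 0 <= bqf P v := bqf_gram_ge0 _ _.
have S_le : bnorm2 (kapp (Smat c i) v)
    <= (1 + (2 * c)^-1) * bnorm2 (kapp P v) + (1 + 2 * c) * (c^-1 / c * bnorm2 (kapp Q v)).
  have e_gt0 : 0 < (2 * c)^-1 by rewrite invr_gt0 mulr_gt0.
  rewrite (bnorm2_ext (_ : _ =1 fun b => kapp P v b + c^-1 *: kapp Q v b)); last first.
    by move=> b; rewrite -kappKZ -kappKD; apply: kapp_ext => // b'; apply: Smat_gram.
  by have := bnorm2_add_le (kapp P v) (fun b => c^-1 *: kapp Q v b) e_gt0; rewrite bnorm2Z invrK.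
apply: le_trans (ler_wpM2l (mulr_ge0 (ltW c_gt0) (ltW c_gt0)) S_le) _.
rewrite bqf_Smat -/P -/Q.
have -> : c * c * ((1 + (2 * c)^-1) * bnorm2 (kapp P v)
                   + (1 + 2 * c) * (c^-1 / c * bnorm2 (kapp Q v)))
    = (c * c + c / 2) * bnorm2 (kapp P v) + (1 + 2 * c) * bnorm2 (kapp Q v) by field.
have -> : c * (1 + 2 * c) * (K + 2) * (bqf P v + c^-1 * bqf Q v)
    = c * (1 + 2 * c) * (K + 2) * bqf P v + (1 + 2 * c) * ((K + 2) * bqf Q v) by field.
apply: lerD; last by rewrite ler_pM2l // ltr_wpDr ?mulr_ge0 ?ltW.
apply: le_trans (ler_wpM2l _ P_le) _; first by have := c_gt0; nra.
by rewrite mulrA ler_wpM2r //; have := K_ge0; nra.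
Qed.

Lemma dual_residual_le (c : R) (lam : Ai adj i -> 'rV[R]_n)
    (v1 : Hi adj i -> 'rV[R]_n) (v2 v3 : Zi adj i -> 'rV[R]_n) : 0 < c ->
  (forall b, kapp (ktr (Amat i)) lam b
             = kapp (ktr (Hmat i)) v1 b + c *: kapp (AtA i) v2 b + c *: kapp (Smat c i) v3 b) ->
  c^-1 * bnorm2 lam <= 3 * (K + 2) / c * bnorm2 v1 + 3 * c * (2 * K + 1) * bqf (AtA i) v2
                       + 3 * (1 + 2 * c) * (2 + K) * bqf (Smat c i) v3.
Proof.
move=> c_gt0 ATlam; have c_neq0 : c != 0 by rewrite gt_eqF.
have lam_le : bnorm2 lam <= 3 * (bnorm2 (kapp (ktr (Hmat i)) v1)
    + c * c * bnorm2 (kapp (AtA i) v2) + c * c * bnorm2 (kapp (Smat c i) v3)).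
  apply: le_trans (Amat_lb lam) _; rewrite (bnorm2_ext ATlam) -!bnorm2Z.
  exact: bnorm2_add3_le.
have v1_le := Hmat_ub v1.
have v2_le := ler_wpM2l (mulr_ge0 (ltW c_gt0) (ltW c_gt0)) (AtA_sq_le v2).
have v3_le := Smat_sq_le v3 c_gt0.
have := bnorm2_ge0 v1; have := bqf_gram_ge0 (Amat i) v2; have := bqf_Smat_ge0 v3 c_gt0.
move=> v3_ge0 v2_ge0 v1_ge0; rewrite -(ler_pM2l c_gt0) mulrA mulfV // mul1r.
rewrite (_ : c * _ = 3 * (K + 2) * bnorm2 v1 + 3 * (c * c) * ((1 + 2 * K) * bqf (AtA i) v2)
                     + 3 * (c * (1 + 2 * c) * (K + 2) * bqf (Smat c i) v3)); last by field.
lra.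
Qed.

End NodeBounds.

Section NetworkOperators.
Variables (R : realFieldType) (N n : nat) (adj : rel 'I_N).
Variables (d : 'I_N -> 'I_N -> R) (r : 'I_N -> R) (c : R).

Lemma kapp_Umat i (z : Zi adj i -> 'rV[R]_n) b :
  kapp (Umat c i) z b
  = kapp (ktr (Hmat i)) (kapp (Hmat i) z) b + c *: kapp (AtA i) z b + c *: kapp (Smat c i) z b.
Proof. by rewrite /Umat kappKD kappKD !kappKZ kapp_kmul. Qed.

Lemma Li_dual_step i (z : Zi adj i -> 'rV[R]_n) w (l l' : Ai adj i -> 'rV[R]_n) :
  c != 0 -> (forall o, l' o = l o + c *: kapp (Amat i) z o) ->
  Li d r c i z w l' = Li d r c i z w l + c^-1 * bnorm2 (bsub l l').
Proof.
move=> c_neq0 l'E.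
rewrite (bnorm2_ext (_ : bsub l l' =1 fun o => (- c) *: kapp (Amat i) z o)); last first.
  by move=> o; rewrite /bsub l'E opprD addrA subrr add0r scaleNr.
rewrite bnorm2Z /Li (bdot_ext l'E (frefl _)) bdotDl bdotZl /bnorm2.
by field.
Qed.

Lemma zobjE (zt z : zconf R n adj) w l : zobj d r c zt w l z
  = Lag d r c z w l + \sum_i c / 2 * bqf (Smat c i) (bsub (z i) (zt i)).
Proof. exact: big_split. Qed.

Lemma wobjE rho z (wt w : wconf R n adj) l : wobj d r c rho z wt l w
  = Lag d r c z w l + \sum_i rho / 2 * bnorm2 (bsub (w i) (wt i)).
Proof. exact: big_split. Qed.

End NetworkOperators.

Unset Implicit Arguments.

Section Iteration.
Context {R : realFieldType} {N n : nat} {adj : rel 'I_N}.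
Context {d : 'I_N -> 'I_N -> R} {r : 'I_N -> R} {c : R}.
Context {anchors : {set 'I_N}} {a : 'I_N -> 'rV[R]_n} {rho : R}.
Context {zs : nat -> zconf R n adj} {ws : nat -> wconf R n adj}.
Context {lam : nat -> lconf R n adj} {zt : nat -> zconf R n adj}.
Hypothesis z_update : forall t, inX anchors a (zs t.+1) /\ inY (zs t.+1) /\
  forall z : zconf R n adj, inX anchors a z -> inY z ->
    zobj d r c (zs t) (ws t) (lam t) (zs t.+1) <= zobj d r c (zs t) (ws t) (lam t) z.
Hypothesis w_update : forall t, (forall i, inballs i (ws t.+1 i)) /\
  forall w : wconf R n adj, (forall i, inballs i (w i)) ->
    wobj d r c rho (zs t.+1) (ws t) (lam t) (ws t.+1)
    <= wobj d r c rho (zs t.+1) (ws t) (lam t) w.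
Hypothesis dual_update :
  forall t i o, lam t.+1 i o = lam t i o + c *: kapp (Amat i) (zs t.+1 i) o.
Hypothesis ztilde_def : forall t i b, kapp (Umat c i) (zt t.+1 i) b
  = kapp (ktr (Hmat i)) (kapp (Dmat d r i) (ws t i)) b
    - kapp (ktr (Amat i)) (lam t i) b + c *: kapp (Smat c i) (zs t i) b.

Lemma Lag_dual_step t : c != 0 ->
  Lag d r c (zs t.+1) (ws t.+1) (lam t.+1)
  = Lag d r c (zs t.+1) (ws t.+1) (lam t)
    + \sum_i c^-1 * bnorm2 (bsub (lam t i) (lam t.+1 i)).
Proof.
by move=> c_neq0; rewrite /Lag -big_split; apply: eq_bigr => i _; apply: Li_dual_step.
Qed.

Lemma primal_descent t :
  Lag d r c (zs t.+2) (ws t.+2) (lam t.+1) - Lag d r c (zs t.+1) (ws t.+1) (lam t.+1)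
  <= \sum_i (- (c / 2) * bqf (Smat c i) (bsub (zs t.+2 i) (zs t.+1 i))
             - rho / 2 * bnorm2 (bsub (ws t.+2 i) (ws t.+1 i))).
Proof.
have [zX [zY _]] := z_update t.
have := (z_update t.+1).2.2 (zs t.+1) zX zY.
have := (w_update t.+1).2 (ws t.+1) (w_update t).1.
rewrite !zobjE !wobjE.
rewrite [X in _ <= _ + X -> _]big1 => [|i _]; last by rewrite bnorm2_bsubss mulr0.
rewrite [X in _ -> _ <= _ + X -> _]big1 => [|i _]; last by rewrite bqf_bsubss mulr0.
under [X in _ -> _ -> _ <= X]eq_bigr => i _ do rewrite mulNr.
rewrite big_split !sumrN /=; lra.
Qed.

Lemma dual_increment_identity t i b :
  kapp (ktr (Amat i)) (bsub (lam t.+1 i) (lam t.+2 i)) b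
  = kapp (ktr (Hmat i)) (bsub (kapp (Hmat i) (bsub (zt t.+2 i) (zt t.+1 i)))
                              (kapp (Dmat d r i) (bsub (ws t.+1 i) (ws t i)))) b
    + c *: kapp (AtA i) (bsub (bsub (zt t.+2 i) (zt t.+1 i))
                              (bsub (zs t.+2 i) (zs t.+1 i))) b
    + c *: kapp (Smat c i) (bsub (bsub (zt t.+2 i) (zt t.+1 i))
                                 (bsub (zs t.+1 i) (zs t i))) b.
Proof.
have ATlam s : kapp (ktr (Amat i)) (lam s.+1 i) b
    = kapp (ktr (Amat i)) (lam s i) b + c *: kapp (AtA i) (zs s.+1 i) b.
  by rewrite (kapp_ext (frefl _) (dual_update s i)) kappD kappZ kapp_kmul.
have := ztilde_def t.+1 i b; have := ztilde_def t i b.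
rewrite !kapp_Umat => /rowP U0 /rowP U1; move: (ATlam t) (ATlam t.+1) => /rowP L1 /rowP L2.
rewrite !kappB !kapp_kappB; apply/rowP => k.
by move: (U0 k) (U1 k) (L1 k) (L2 k); rewrite !mxE; lra.
Qed.

End Iteration.

Theorem mainTheorem3 (R : realFieldType) (N n : nat) (adj : rel 'I_N)
  (anchors : {set 'I_N}) (a : 'I_N -> 'rV[R]_n)
  (d : 'I_N -> 'I_N -> R) (r : 'I_N -> R) (c rho : R)
  (zs : nat -> zconf R n adj) (ws : nat -> wconf R n adj)
  (lam : nat -> lconf R n adj) (zt : nat -> zconf R n adj) :
  (forall i j, adj i j = adj j i) ->
  (forall i, ~~ adj i i) ->
  (forall i j, connect adj i j) ->
  (forall i, (0 < Ndeg adj i)%N) ->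
  anchors != set0 ->
  (forall i j, adj i j -> d i j = d j i) ->
  (forall i j, adj i j -> 0 <= d i j) ->
  (forall i, 0 <= r i) ->
  0 < c -> 0 < rho ->
  (forall t, inX anchors a (zs t.+1) /\ inY (zs t.+1) /\
     forall z : zconf R n adj, inX anchors a z -> inY z ->
       zobj d r c (zs t) (ws t) (lam t) (zs t.+1)
       <= zobj d r c (zs t) (ws t) (lam t) z) ->
  (forall t, (forall i, inballs i (ws t.+1 i)) /\
     forall w : wconf R n adj, (forall i, inballs i (w i)) ->
       wobj d r c rho (zs t.+1) (ws t) (lam t) (ws t.+1)
       <= wobj d r c rho (zs t.+1) (ws t) (lam t) w) ->
  (forall i o, lam 0%N i o = 0) ->
  (forall t i o, lam t.+1 i o = lam t i o + c *: kapp (Amat i) (zs t.+1 i) o) ->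
  (forall t i b, kapp (Umat c i) (zt t.+1 i) b
     = kapp (ktr (Hmat i)) (kapp (Dmat d r i) (ws t i)) b
       - kapp (ktr (Amat i)) (lam t i) b
       + c *: kapp (Smat c i) (zs t i) b) ->
  forall t : nat, (1 <= t)%N ->
  Lag d r c (zs t.+1) (ws t.+1) (lam t.+1) - Lag d r c (zs t) (ws t) (lam t)
  <= \sum_(i < N)
     ( - (c / 2) * bqf (Smat c i) (bsub (zs t.+1 i) (zs t i))
       - rho / 2 * bnorm2 (bsub (ws t.+1 i) (ws t i))
       + 3 * ((Nmax adj)%:R + 2) / c
           * bnorm2 (bsub (kapp (Hmat i) (bsub (zt t.+1 i) (zt t i)))
                          (kapp (Dmat d r i) (bsub (ws t i) (ws t.-1 i))))
       + 3 * c * (2 * (Nmax adj)%:R + 1)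
           * bqf (AtA i) (bsub (bsub (zt t.+1 i) (zt t i))
                               (bsub (zs t.+1 i) (zs t i)))
       + 3 * (1 + 2 * c) * (2 + (Nmax adj)%:R)
           * bqf (Smat c i) (bsub (bsub (zt t.+1 i) (zt t i))
                                  (bsub (zs t i) (zs t.-1 i)))).
Proof.
move=> _ _ _ _ _ _ _ _ c_gt0 _ z_update w_update _ dual_update ztilde_def [//|t] _ /=.
have c_neq0 : c != 0 by rewrite gt_eqF.
rewrite (Lag_dual_step dual_update t.+1 c_neq0).
have descent := primal_descent z_update w_update t.
have residual : \sum_i c^-1 * bnorm2 (bsub (lam t.+1 i) (lam t.+2 i)) <= \sum_i
    (3 * ((Nmax adj)%:R + 2) / c
       * bnorm2 (bsub (kapp (Hmat i) (bsub (zt t.+2 i) (zt t.+1 i)))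
                      (kapp (Dmat d r i) (bsub (ws t.+1 i) (ws t i))))
     + 3 * c * (2 * (Nmax adj)%:R + 1)
       * bqf (AtA i) (bsub (bsub (zt t.+2 i) (zt t.+1 i)) (bsub (zs t.+2 i) (zs t.+1 i)))
     + 3 * (1 + 2 * c) * (2 + (Nmax adj)%:R)
       * bqf (Smat c i) (bsub (bsub (zt t.+2 i) (zt t.+1 i)) (bsub (zs t.+1 i) (zs t i)))).
  apply: ler_sum => i _; apply: dual_residual_le => // [|b].
    by rewrite ler_nat /Nmax (bigD1 i) //= leq_maxl.
  exact: dual_increment_identity dual_update ztilde_def t i b.
rewrite (eq_bigr _ (fun i _ => esym (addrA _ _ _))) (eq_bigr _ (fun i _ => esym (addrA _ _ _))).
rewrite big_split /=; under [X in _ <= _ + X]eq_bigr => i _ do rewrite addrA.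
lra.
Qed.
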